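(* Let $(A,\mu,\alpha)$ be a commutative Hom-associative algebra, $k$ a natural number, and $D:A\to A$ a linear map commuting with $\alpha$ such that $D(ab)=D(a)\alpha^k(b)+\alpha^k(a)D(b)$ for all $a,b\in A$. Define $x\bullet y=\alpha^k(x)D(y)$. Then $(A,\bullet,\alpha^{k+1})$ is a Hom-Novikov algebra.
   Context: A Hom-associative algebra $(A,\mu,\alpha)$: linear space, bilinear $\mu(x\otimes y)=xy$, linear $\alpha$ with $\alpha(xy)=\alpha(x)\alpha(y)$ and $\alpha(x)(yz)=(xy)\alpha(z)$; commutative means $xy=yx$. A Hom-Novikov algebra $(A,\cdot,\gamma)$ is a left Hom-pre-Lie algebra, i.e. $\gamma(x\cdot y)=\gamma(x)\cdot\gamma(y)$ and $\gamma(x)\cdot(y\cdot z)-(x\cdot y)\cdot\gamma(z)=\gamma(y)\cdot(x\cdot z)-(y\cdot x)\cdot\gamma(z)$, which moreover satisfies $(x\cdot y)\cdot\gamma(z)=(x\cdot z)\cdot\gamma(y)$ for all $x,y,z$. *)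

From HB Require Import structures.
From mathcomp Require Import all_boot all_order all_algebra.
Set Implicit Arguments. Unset Strict Implicit. Unset Printing Implicit Defensive.
Import GRing.Theory.
Local Open Scope ring_scope.

Definition bilinear_mul (K : fieldType) (V : lmodType K) (mu : V -> V -> V) : Prop :=
  (forall a x y z, mu (a *: x + y) z = a *: mu x z + mu y z) /\
  (forall a x y z, mu x (a *: y + z) = a *: mu x y + mu x z).

Definition hom_associative (K : fieldType) (V : lmodType K)
  (mu : V -> V -> V) (alpha : {linear V -> V}) : Prop :=
  bilinear_mul mu /\
  (forall x y, alpha (mu x y) = mu (alpha x) (alpha y)) /\
  (forall x y z, mu (alpha x) (mu y z) = mu (mu x y) (alpha z)).

Definition commutative_mul (V : Type) (mu : V -> V -> V) : Prop :=
  forall x y, mu x y = mu y x.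

Definition hom_preLie (K : fieldType) (V : lmodType K)
  (m : V -> V -> V) (gamma : {linear V -> V}) : Prop :=
  bilinear_mul m /\
  (forall x y, gamma (m x y) = m (gamma x) (gamma y)) /\
  (forall x y z, m (gamma x) (m y z) - m (m x y) (gamma z)
                 = m (gamma y) (m x z) - m (m y x) (gamma z)).

Definition hom_Novikov (K : fieldType) (V : lmodType K)
  (m : V -> V -> V) (gamma : {linear V -> V}) : Prop :=
  hom_preLie m gamma /\
  (forall x y z, m (m x y) (gamma z) = m (m x z) (gamma y)).

Definition lin_iter (K : fieldType) (V : lmodType K) (f : {linear V -> V}) (n : nat) : V -> V :=
  iter n f.

Lemma lin_iter_is_linear (K : fieldType) (V : lmodType K) (f : {linear V -> V}) (n : nat) :
  linear (lin_iter f n).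
Proof.
rewrite /lin_iter; elim: n => [|n IH] a x y //=.
by rewrite IH !linearP.
Qed.

HB.instance Definition _ (K : fieldType) (V : lmodType K) (f : {linear V -> V}) (n : nat) :=
  GRing.isLinear.Build K V V *:%R (lin_iter f n) (lin_iter_is_linear f n).

From HB Require Import structures.
From mathcomp Require Import all_boot all_order all_algebra.
Import GRing.Theory.
Local Open Scope ring_scope.

(* Write beta = alpha^k and gamma = alpha^(k+1), so that x . y = beta x * D y.
   Hom-associativity and the twisted Leibniz rule give
     (x . y) . gamma z = alpha (beta^2 x) * (beta D y * beta D z),
   which is symmetric in y and z: this is the Novikov identity.  Expanding
   D (beta y * D z) by Leibniz, the Hom-associator of . is left with
     gamma x . (y . z) - (x . y) . gamma z = (beta^2 x * beta^2 y) * alpha (D^2 z),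
   which is symmetric in x and y by commutativity: this is left Hom-pre-Lie. *)

Section Iterates.

Variables (K : fieldType) (V : lmodType K).

Lemma lin_iter_comm (f g : {linear V -> V}) n x :
  (forall y, g (f y) = f (g y)) -> g (lin_iter f n x) = lin_iter f n (g x).
Proof. by move=> fg; rewrite /lin_iter; elim: n => //= n IH; rewrite fg IH. Qed.

Lemma lin_iter_multiplicative (mu : V -> V -> V) (f : {linear V -> V}) n x y :
  (forall a b, f (mu a b) = mu (f a) (f b)) ->
  lin_iter f n (mu x y) = mu (lin_iter f n x) (lin_iter f n y).
Proof. by move=> fM; rewrite /lin_iter; elim: n => //= n ->; rewrite fM. Qed.

End Iterates.

Section HomNovikovFromDerivation.

Variables (K : fieldType) (V : lmodType K).
Variables (mu : V -> V -> V) (alpha D : {linear V -> V}) (k : nat).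
Hypothesis mu_hom_assoc : hom_associative mu alpha.
Hypothesis muC : commutative_mul mu.
Hypothesis D_alpha : forall x, D (alpha x) = alpha (D x).

Let beta := lin_iter alpha k.

Hypothesis D_mu : forall a b, D (mu a b) = mu (D a) (beta b) + mu (beta a) (D b).

Let bullet x y := mu (beta x) (D y).
Let gamma : {linear V -> V} := lin_iter alpha k.+1.

Lemma gammaE x : gamma x = alpha (beta x).
Proof. by []. Qed.

Lemma mu_bilinear : bilinear_mul mu.
Proof. by case: mu_hom_assoc. Qed.

Lemma alpha_mu x y : alpha (mu x y) = mu (alpha x) (alpha y).
Proof. by case: mu_hom_assoc => _ []. Qed.

Lemma mu_homA x y z : mu (alpha x) (mu y z) = mu (mu x y) (alpha z).
Proof. by case: mu_hom_assoc => _ []. Qed.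

Lemma mu_addr x y z : mu x (y + z) = mu x y + mu x z.
Proof. by case: mu_bilinear => _ /(_ 1 x y z); rewrite !scale1r. Qed.

Lemma beta_mu x y : beta (mu x y) = mu (beta x) (beta y).
Proof. exact/lin_iter_multiplicative/alpha_mu. Qed.

Lemma D_beta x : D (beta x) = beta (D x).
Proof. exact/lin_iter_comm/D_alpha. Qed.

Lemma alpha_beta x : alpha (beta x) = beta (alpha x).
Proof. exact/lin_iter_comm. Qed.

Lemma bullet_bilinear : bilinear_mul bullet.
Proof.
case: mu_bilinear => mu_linl mu_linr; split=> a x y z.
- by rewrite /bullet /beta linearP mu_linl.
- by rewrite /bullet linearP mu_linr.
Qed.

Lemma gamma_bullet x y : gamma (bullet x y) = bullet (gamma x) (gamma y).
Proof.
by rewrite /bullet !gammaE beta_mu alpha_mu -alpha_beta D_alpha D_beta.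
Qed.

Lemma bullet_gammar x y z :
  bullet (bullet x y) (gamma z) = mu (alpha (beta (beta x))) (mu (beta (D y)) (beta (D z))).
Proof.
by rewrite /bullet gammaE beta_mu D_alpha D_beta -mu_homA.
Qed.

Lemma bullet_hom_associator x y z :
  bullet (gamma x) (bullet y z) - bullet (bullet x y) (gamma z)
  = mu (mu (beta (beta x)) (beta (beta y))) (alpha (D (D z))).
Proof.
rewrite bullet_gammar /bullet gammaE D_mu mu_addr D_beta -alpha_beta.
by rewrite addrAC subrr add0r mu_homA.
Qed.

Lemma bullet_hom_preLie : hom_preLie bullet gamma.
Proof.
split; [exact: bullet_bilinear | split; first exact: gamma_bullet].
by move=> x y z; rewrite !bullet_hom_associator [mu (beta _) _]muC.
Qed.

Lemma bullet_hom_Novikov : hom_Novikov bullet gamma.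
Proof.
split; first exact: bullet_hom_preLie.
by move=> x y z; rewrite !bullet_gammar [mu (beta _) _]muC.
Qed.

End HomNovikovFromDerivation.

Theorem mainTheorem11 (K : fieldType) (V : lmodType K)
  (mu : V -> V -> V) (alpha : {linear V -> V}) (k : nat) (D : {linear V -> V}) :
  hom_associative mu alpha ->
  commutative_mul mu ->
  (forall x, D (alpha x) = alpha (D x)) ->
  (forall a b, D (mu a b) = mu (D a) (lin_iter alpha k b) + mu (lin_iter alpha k a) (D b)) ->
  hom_Novikov (fun x y => mu (lin_iter alpha k x) (D y))
              (lin_iter alpha k.+1 : {linear V -> V}).
Proof. exact: bullet_hom_Novikov. Qed.
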